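(* Let $n\ge1$ and $S\subseteq[n-1]$. Then \[\#\{\pi\in\mathrm{Av}_n(132)\mid \mathrm{Des}(\pi)=S\}=\#\{\mathcal D\text{ Dyck path of semilength } n\mid \delta(\mathcal D)=\alpha(S)\}.\]
   Context: $\mathrm{Av}_n(132)$ is the set of permutations of $[n]=\{1,\dots,n\}$ with no subsequence order-isomorphic to $132$. $\mathrm{Des}(\pi)=\{i\in[n-1]:\pi(i)>\pi(i+1)\}$. For $S=\{s_1<\dots<s_m\}\subseteq[n-1]$, $\alpha(S)$ is the composition $(s_1,s_2-s_1,\dots,s_m-s_{m-1},n-s_m)$ of $n$. A Dyck path of semilength $n$ is a word in $U,D$ with $n$ letters of each kind such that every prefix has at least as many $U$'s as $D$'s. Writing such a path uniquely as $U^{\alpha_1}D^{\delta_1}U^{\alpha_2}D^{\delta_2}\cdots U^{\alpha_k}D^{\delta_k}$ with all exponents positive, its ascent composition is $(\alpha_1,\dots,\alpha_k)$ and its descent composition is $\delta(\mathcal D)=(\delta_1,\dots,\delta_k)$. *)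

From mathcomp Require Import all_boot all_order all_fingroup.
Set Implicit Arguments. Unset Strict Implicit. Unset Printing Implicit Defensive.

(* Permutations of [n] are modelled as 'S_n (permutations of 'I_n = {0..n-1});
   position p (1-based) corresponds to ordinal p-1.  Values are compared as nats,
   which is order-isomorphic to [n]. *)

Definition contains132 n (pi : 'S_n) : bool :=
  [exists i : 'I_n, exists j : 'I_n, exists k : 'I_n,
     [&& i < j, j < k, pi i < pi k & pi k < pi j]].

Definition avoids132 n (pi : 'S_n) : bool := ~~ contains132 pi.

(* Descent set, as a set of natural numbers in [n-1] = {1,...,n-1} (1-based):
   d is a descent iff pi(d) > pi(d+1) in 1-based positions, i.e. the entry at
   0-based index d-1 exceeds the entry at 0-based index d. *)
Definition Des n (pi : 'S_n) : seq nat :=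
  [seq d <- iota 1 n.-1 | nth 0 [seq val (pi x) | x <- enum 'I_n] d.-1 >
                          nth 0 [seq val (pi x) | x <- enum 'I_n] d].

(* A subset S of [n-1] is represented by its strictly increasing list of
   elements (each in {1,...,n-1}). *)
Definition subset_of_nm1 n (S : seq nat) : bool :=
  sorted ltn S && all (fun s => (1 <= s) && (s <= n.-1)) S.

Definition alpha n (S : seq nat) : seq nat :=
  rcons (pairmap (fun a b => b - a) 0 S) (n - last 0 S).

(* Dyck paths: words over bool, true = U, false = D *)
Definition is_dyck n (w : seq bool) : bool :=
  [&& size w == n.*2, count id w == n, count negb w == n &
      all (fun i => count negb (take i w) <= count id (take i w)) (iota 0 (size w).+1)].

Fixpoint runs (w : seq bool) : seq (bool * nat) :=
  match w with
  | [::] => [::]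
  | b :: w' =>
      match runs w' with
      | (c, k) :: r => if b == c then (c, k.+1) :: r else (b, 1) :: (c, k) :: r
      | [::] => [:: (b, 1)]
      end
  end.

Definition descent_comp (w : seq bool) : seq nat :=
  [seq p.2 | p <- runs w & ~~ p.1].

Definition dyck_set n : {set (n.*2).-tuple bool} :=
  [set w : (n.*2).-tuple bool | is_dyck n w].

From mathcomp Require Import all_boot all_order all_fingroup zify.
Set Implicit Arguments. Unset Strict Implicit. Unset Printing Implicit Defensive.

(* A 132-avoiding permutation of {0, ..., n-1} is determined by its prefix minima
   m_0 >= m_1 >= ... >= m_(n-1): an entry that is not a new left-to-right minimum
   must be the least unused value above the current minimum (otherwise the
   current minimum, that entry and the skipped value form a 132), and filling
   the positions in this greedy way realises every nonincreasing sequence with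
   m_k + k < n.  Such sequences are in bijection with Dyck paths via
   U^(n-m_0) D U^(m_0-m_1) D ... U^(m_(n-2)-m_(n-1)) D.  For a 132-avoider,
   d is a descent exactly when the entry at 0-based position d is a new
   minimum, i.e. when a U separates the d-th and (d+1)-st D; hence the maximal
   runs of D's have lengths alpha(Des). *)

(** * Descent compositions *)

Lemma runs_cons_head b w : exists k r, runs (b :: w) = (b, k) :: r.
Proof.
rewrite /=; case: (runs w) => [|[c k] r]; first by exists 1, [::].
by case: eqP => [->|_]; [exists k.+1, r | exists 1, ((c, k) :: r)].
Qed.

Lemma runs_cons_of_head b w c k r : runs w = (c, k) :: r ->
  runs (b :: w) = if b == c then (c, k.+1) :: r else (b, 1) :: (c, k) :: r.
Proof. by move=> /= ->. Qed.

Lemma descent_comp_cons_true w : descent_comp (true :: w) = descent_comp w.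
Proof. by rewrite /descent_comp /=; case: (runs w) => [|[[] k] r]. Qed.

Lemma descent_comp_nseq_true c w : descent_comp (nseq c true ++ w) = descent_comp w.
Proof. by elim: c => //= c IH; rewrite descent_comp_cons_true. Qed.

Lemma descent_comp_false_false w :
  descent_comp [:: false, false & w] =
  (head 0 (descent_comp (false :: w))).+1 :: behead (descent_comp (false :: w)).
Proof.
have [k [r E]] := runs_cons_head false w.
by rewrite /descent_comp (runs_cons_of_head false E) E.
Qed.

Lemma descent_comp_false_true w :
  descent_comp [:: false, true & w] = 1 :: descent_comp (true :: w).
Proof.
have [k [r E]] := runs_cons_head true w.
by rewrite /descent_comp (runs_cons_of_head false E) E.
Qed.

Lemma pairmap_subn_succ a s :
  pairmap (fun u v => v - u) a.+1 (map S s) = pairmap (fun u v => v - u) a s.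
Proof. by elim: s a => //= x s IH a; rewrite subSS IH. Qed.

Lemma alpha_cons1 n s : alpha n.+1 (1 :: map S s) = 1 :: alpha n s.
Proof. by rewrite /alpha /= pairmap_subn_succ (last_map S) subSS. Qed.

Lemma alpha_map_succ n s :
  alpha n.+1 (map S s) = (head 0 (alpha n s)).+1 :: behead (alpha n s).
Proof.
case: s => [|x s]; first by rewrite /alpha /= !subn0.
by rewrite /alpha /= pairmap_subn_succ (last_map S) subSS !subn0.
Qed.

Lemma pairmap_subn_inj a s t : path leq a s -> path leq a t ->
  pairmap (fun u v => v - u) a s = pairmap (fun u v => v - u) a t -> s = t.
Proof.
elim: s a t => [|x s IH] a [|y t] //= /andP[ax ps] /andP[ay pt] [xy st].
have {xy ay} y_x : y = x by lia.
by rewrite y_x in pt st *; rewrite (IH x t).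
Qed.

Lemma alpha_inj n s t : sorted leq s -> sorted leq t -> alpha n s = alpha n t -> s = t.
Proof.
move=> ss st /rcons_inj [E _].
by apply: (pairmap_subn_inj _ _ E); rewrite path_min_sorted //; apply/allP.
Qed.

(** * Dyck words of nonincreasing sequences *)

Definition descents (s : seq nat) : seq nat :=
  [seq d <- iota 1 (size s).-1 | nth 0 s d < nth 0 s d.-1].

Lemma descents_cons2 x y s : descents [:: x, y & s] =
  if y < x then 1 :: map S (descents (y :: s)) else map S (descents (y :: s)).
Proof.
have iota2 : iota 2 (size s) = map S (iota 1 (size s)).
  by rewrite (iotaDl 1 1); apply: eq_map => i; rewrite add1n.
rewrite /descents /= iota2 filter_map.
rewrite (@eq_in_filter _ _ (fun d => nth 0 (y :: s) d < nth 0 (y :: s) d.-1)).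
  by case: ifP.
by case=> [|d] //; rewrite mem_iota.
Qed.

Fixpoint minima_word (m : nat) (ms : seq nat) : seq bool :=
  if ms is x :: ms' then nseq (m - x) true ++ false :: minima_word x ms' else [::].

Lemma descent_comp_minima_word m ms : ms != [::] ->
  descent_comp (minima_word m ms) = alpha (size ms) (descents ms).
Proof.
elim: ms m => // x [|y ms] IH m _; first by rewrite /= descent_comp_nseq_true.
have := IH x isT; rewrite [minima_word x _]/= descent_comp_nseq_true => IHx.
rewrite [minima_word m _]/= descent_comp_nseq_true descents_cons2.
case: ltnP => [y_lt_x | x_le_y].
  rewrite -(prednK (_ : 0 < x - y)) ?subn_gt0 //=.
  by rewrite descent_comp_false_true descent_comp_cons_true
    descent_comp_nseq_true IHx alpha_cons1.
have -> : x - y = 0 by lia.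
by rewrite /= descent_comp_false_false IHx alpha_map_succ.
Qed.

Lemma path_geq_mem m ms x : path geq m ms -> x \in ms -> x <= m.
Proof. by move=> /(order_path_min (rev_trans leq_trans)) /allP; apply. Qed.

Lemma nseq_true_false_inj a b u v :
  nseq a true ++ false :: u = nseq b true ++ false :: v -> a = b /\ u = v.
Proof. by elim: a b => [|a IH] [|b] //= [] // /IH [-> ->]. Qed.

Lemma minima_word_inj m ms1 ms2 : path geq m ms1 -> path geq m ms2 ->
  minima_word m ms1 = minima_word m ms2 -> ms1 = ms2.
Proof.
elim: ms1 m ms2 => [|x ms1 IH] m [|y ms2] //=; try by case: (m - _).
move=> /andP[xm p1] /andP[ym p2] /nseq_true_false_inj [xy E].
have {xy ym} y_x : y = x by lia.
by rewrite y_x in p2 E *; rewrite (IH x ms2).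
Qed.

Lemma count_minima_word_false m ms : count negb (minima_word m ms) = size ms.
Proof. by elim: ms m => //= x ms IH m; rewrite count_cat count_nseq /= IH; lia. Qed.

Lemma count_minima_word_true m ms : path geq m ms ->
  count id (minima_word m ms) = m - last m ms.
Proof.
elim: ms m => [|x ms IH] m /=; first by rewrite subnn.
move=> /andP[xm pms]; rewrite count_cat count_nseq /= IH //.
have : last x ms <= x.
  by have := mem_last x ms; rewrite in_cons => /predU1P [-> // | /(path_geq_mem pms)].
lia.
Qed.

Definition ballot b (w : seq bool) :=
  forall i, count negb (take i w) <= b + count id (take i w).

Lemma ballot_cons_true b w : ballot b (true :: w) <-> ballot b.+1 w.
Proof.
split=> H i; first by have := H i.+1; rewrite /=; lia.
by case: i => [|i] //=; have := H i; lia.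
Qed.

Lemma ballot_cons_false b w : ballot b (false :: w) <-> 0 < b /\ ballot b.-1 w.
Proof.
split=> [H | [b_gt0 H] [|i] //=]; last by have := H i; lia.
split; first by have := H 1; rewrite /= take0 /=; lia.
by move=> i; have := H i.+1; rewrite /=; lia.
Qed.

Lemma ballot_nseq_true c b w : ballot b (nseq c true ++ w) <-> ballot (b + c) w.
Proof. by elim: c b => [|c IH] b; rewrite ?addn0 //= ballot_cons_true IH addSnnS. Qed.

Lemma is_dyckP n w :
  is_dyck n w <-> [/\ count id w = n, count negb w = n & ballot 0 w].
Proof.
split.
  case/and4P => _ /eqP -> /eqP -> /allP H; split=> // i.
  case: (leqP i (size w)) => [i_le | /ltnW i_ge]; first by apply: H; rewrite mem_iota.
  by have := H (size w); rewrite take_size take_oversize // mem_iota add0n ltnSn; apply.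
case=> ct cf H; apply/and4P; split; rewrite ?ct ?cf //; last by apply/allP => i _; apply: H.
by rewrite -(count_predC id w) ct -[count _ w]/(count negb w) cf addnn.
Qed.

Lemma ballot_minima_word b m ms : path geq m ms ->
  (forall k, k < size ms -> k < b + (m - nth 0 ms k)) -> ballot b (minima_word m ms).
Proof.
elim: ms m b => [|x ms IH] m b /=; first by move=> _ _ i.
move=> /andP[xm pms] H; apply/ballot_nseq_true/ballot_cons_false.
have h0 := H 0 isT; split; first by rewrite /= in h0; lia.
apply: IH => // k k_lt; have := H k.+1 k_lt.
have := path_geq_mem pms (mem_nth 0 k_lt); rewrite /=; lia.
Qed.

Definition minima_seq n ms :=
  [/\ size ms = n, path geq n ms & forall k, k < n -> nth 0 ms k + k < n].

Lemma minima_word_dyck n ms : minima_seq n ms -> is_dyck n (minima_word n ms).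
Proof.
case=> size_ms pms bound; apply/is_dyckP; split.
- rewrite count_minima_word_true //.
  case: n size_ms bound pms => [|n] size_ms bound _; first by rewrite sub0n.
  rewrite -nth_last size_ms /= (set_nth_default 0) ?size_ms //.
  by have := bound n (ltnSn n); lia.
- by rewrite count_minima_word_false.
- by apply: ballot_minima_word => // k; rewrite size_ms => /bound; lia.
Qed.

Fixpoint minima_of_word (m : nat) (w : seq bool) : seq nat :=
  match w with
  | [::] => [::]
  | true :: w' => minima_of_word m.-1 w'
  | false :: w' => m :: minima_of_word m w'
  end.

Lemma size_minima_of_word m w : size (minima_of_word m w) = count negb w.
Proof. by elim: w m => //= [[]] w IH m /=; rewrite IH. Qed.

Lemma path_minima_of_word m w : path geq m (minima_of_word m w).
Proof.
elim: w m => //= [[]] w IH m /=; last by rewrite leqnn IH.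
by case: (minima_of_word m.-1 w) (IH m.-1) => //= x l /andP[xm ->]; rewrite andbT; lia.
Qed.

Lemma minima_of_wordK m w : last false w = false -> count id w <= m ->
  minima_word m (minima_of_word m w) = w.
Proof.
suff gen j : last (j != 0) w = false -> j + count id w <= m ->
    minima_word m (minima_of_word (m - j) w) = nseq j true ++ w.
  by move=> lw cw; have := gen 0; rewrite subn0; apply.
elim: w m j => [|b w IH] m j /=; first by case: j.
case: b => /= lw cw.
  by rewrite -subnS IH ?addSnnS // -addn1 nseqD -catA.
rewrite subKn; last by lia.
by have := IH (m - j) 0; rewrite subn0 => -> //; lia.
Qed.

Lemma minima_of_word_bound b m w : ballot b w -> count id w <= m ->
  forall k, k < count negb w -> nth 0 (minima_of_word m w) k + k < m + b.
Proof.
elim: w m b => [|c w IH] m b //=; case: c => /= H cw k k_lt.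
  move: H => /ballot_cons_true H; have := IH m.-1 _ H _ k k_lt; lia.
move: H => /ballot_cons_false [b_gt0 H]; case: k k_lt => [|k] k_lt /=; first by lia.
have := IH m _ H cw k k_lt; lia.
Qed.

Lemma dyck_last_false n w : is_dyck n w -> last false w = false.
Proof.
case/is_dyckP; case/lastP: w => // w' b; rewrite last_rcons; case: b => //.
by rewrite -cats1 !count_cat /= => ct cf /(_ (size w')); rewrite take_size_cat //; lia.
Qed.

Lemma dyck_minima_word n w : is_dyck n w ->
  exists2 ms, minima_seq n ms & minima_word n ms = w.
Proof.
move=> D; have /is_dyckP [ct cf H] := D.
exists (minima_of_word n w); last by rewrite minima_of_wordK ?ct ?(dyck_last_false D).
split; [by rewrite size_minima_of_word | exact: path_minima_of_word | ].
by move=> k k_lt; rewrite -[n in _ < n]addn0; apply: minima_of_word_bound; rewrite ?ct ?cf.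
Qed.

(** * Prefix minima and 132-avoidance *)

Lemma foldl_minn_le_init m s : foldl minn m s <= m.
Proof. by elim: s m => //= y s IH m; apply: leq_trans (IH _) (geq_minl _ _). Qed.

Lemma foldl_minn_le m s x : x \in s -> foldl minn m s <= x.
Proof.
elim: s m => //= y s IH m; rewrite in_cons => /predU1P [-> | /IH //].
exact: leq_trans (foldl_minn_le_init _ _) (geq_minr _ _).
Qed.

Lemma foldl_minn_mem m s : foldl minn m s \in m :: s.
Proof.
elim: s m => [m | y s IH m] /=; first exact: mem_head.
have := IH (minn m y).
rewrite !in_cons => /predU1P [-> | ->]; last by rewrite !orbT.
by rewrite /minn; case: ltnP; rewrite eqxx ?orbT.
Qed.

Lemma path_scanl_minn m s : path geq m (scanl minn m s).
Proof. by elim: s m => //= x s IH m; rewrite geq_minl IH. Qed.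

Definition prefix_min m (s : seq nat) k := foldl minn m (take k s).

Lemma prefix_minS m s k : k < size s ->
  prefix_min m s k.+1 = minn (prefix_min m s k) (nth 0 s k).
Proof. by move=> k_lt; rewrite /prefix_min (take_nth 0 k_lt) foldl_rcons. Qed.

Lemma nth_scanl_minn m s k : k < size s ->
  nth 0 (scanl minn m s) k = prefix_min m s k.+1.
Proof. by move=> k_lt; rewrite nth_scanl. Qed.

Lemma prefix_min_le m s a k : a < k -> a < size s -> prefix_min m s k <= nth 0 s a.
Proof.
move=> a_lt_k a_lt; apply: foldl_minn_le; rewrite -(nth_take 0 a_lt_k).
by apply: mem_nth; rewrite size_take; case: ifP => // /negbT; rewrite -leqNgt; lia.
Qed.

Lemma prefix_min_attained m s k : prefix_min m s k < m ->
  exists2 a, a < k & nth 0 s a = prefix_min m s k.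
Proof.
move=> lt_m; have := foldl_minn_mem m (take k s); rewrite -/(prefix_min m s k).
rewrite in_cons => /predU1P [E | x_in]; first by rewrite E ltnn in lt_m.
have x_s := mem_take x_in.
by exists (index (prefix_min m s k) s); [rewrite -in_take | rewrite nth_index].
Qed.

Definition next_free n (u : seq nat) p :=
  find (fun v => (p < v) && (v \notin u)) (iota 0 n).

Lemma next_freeP n u p v : v < n -> p < v -> v \notin u ->
  [/\ next_free n u p <= v, p < next_free n u p & next_free n u p \notin u].
Proof.
move=> v_lt p_lt v_u.
have has_v : has (fun v => (p < v) && (v \notin u)) (iota 0 n).
  by apply/hasP; exists v; rewrite ?mem_iota ?p_lt.
have := nth_find 0 has_v; rewrite has_find size_iota in has_v.
rewrite nth_iota // add0n => /andP[p_lt_f f_u]; split=> //.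
rewrite leqNgt; apply/negP => lt_v.
by have := before_find 0 lt_v; rewrite nth_iota // add0n p_lt v_u.
Qed.

Definition greedy n (s : seq nat) := forall k, k < size s ->
  prefix_min n s k <= nth 0 s k -> nth 0 s k = next_free n (take k s) (prefix_min n s k).

Definition avoids132_seq (s : seq nat) := forall a b c, a < b < c -> c < size s ->
  ~~ (nth 0 s a < nth 0 s c < nth 0 s b).

Lemma perm_iota0 n s : uniq s -> size s = n -> all (fun v => v < n) s ->
  perm_eq s (iota 0 n).
Proof.
move=> s_uniq s_size /allP s_lt.
have s_sub : {subset s <= iota 0 n} by move=> v /s_lt; rewrite mem_iota.
apply: uniq_perm s_uniq (iota_uniq 0 n) (uniq_min_size s_uniq s_sub _).2.
by rewrite size_iota s_size.
Qed.

Section PermutationSequence.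

Variables (n : nat) (s : seq nat).
Hypothesis s_perm : perm_eq s (iota 0 n).

Lemma size_perm_iota : size s = n.
Proof. by rewrite (perm_size s_perm) size_iota. Qed.

Lemma uniq_perm_iota : uniq s.
Proof. by rewrite (perm_uniq s_perm) iota_uniq. Qed.

Lemma mem_perm_iota v : (v \in s) = (v < n).
Proof. by rewrite (perm_mem s_perm) mem_iota. Qed.

Lemma nth_perm_iota_lt k : k < n -> nth 0 s k < n.
Proof. by move=> k_lt; rewrite -mem_perm_iota mem_nth // size_perm_iota. Qed.

Lemma nth_perm_iota_in_take c k : c < n -> (nth 0 s c \in take k s) = (c < k).
Proof.
move=> c_lt; rewrite in_take ?mem_nth ?size_perm_iota //.
by rewrite index_uniq ?size_perm_iota ?uniq_perm_iota.
Qed.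

Lemma nth_perm_iota_inj a c : a < n -> c < n -> (nth 0 s a == nth 0 s c) = (a == c).
Proof. by move=> a_lt c_lt; rewrite nth_uniq ?size_perm_iota ?uniq_perm_iota. Qed.

Lemma minima_seq_scanl : minima_seq n (scanl minn n s).
Proof.
split; [by rewrite size_scanl size_perm_iota | exact: path_scanl_minn | ].
move=> k k_lt; rewrite nth_scanl_minn ?size_perm_iota //.
set m := prefix_min n s k.+1.
suff : k.+1 <= n - m by lia.
have <- : size (take k.+1 s) = k.+1 by rewrite size_takel ?size_perm_iota.
rewrite -(size_iota m (n - m)) uniq_leq_size ?take_uniq ?uniq_perm_iota //.
move=> v v_in; rewrite mem_iota subnKC; last by rewrite /m /prefix_min foldl_minn_le_init.
by rewrite (foldl_minn_le _ v_in) -mem_perm_iota (mem_take v_in).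
Qed.

Lemma greedy_of_avoids132 : avoids132_seq s -> greedy n s.
Proof.
move=> s_av k; rewrite size_perm_iota => k_lt; set m := prefix_min n s k => m_le.
have sk_lt := nth_perm_iota_lt k_lt.
have [a a_lt sa] : exists2 a, a < k & nth 0 s a = m by apply: prefix_min_attained; lia.
have m_lt : m < nth 0 s k.
  by rewrite ltn_neqAle m_le andbT -sa nth_perm_iota_inj; lia.
have sk_notin : nth 0 s k \notin take k s by rewrite nth_perm_iota_in_take // ltnn.
have [f_le m_lt_f f_notin] := next_freeP sk_lt m_lt sk_notin.
apply/eqP; rewrite eqn_leq f_le andbT leqNgt; apply/negP => f_lt.
set f := next_free n (take k s) m in f_le m_lt_f f_notin f_lt.
have /(nthP 0) [c c_lt sc] : f \in s by rewrite mem_perm_iota; lia.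
rewrite size_perm_iota in c_lt.
have k_lt_c : k < c.
  rewrite ltn_neqAle leqNgt -(nth_perm_iota_in_take k c_lt) sc f_notin andbT.
  by apply/eqP => k_c; move: f_lt; rewrite -sc k_c ltnn.
by move: (s_av a k c); rewrite a_lt k_lt_c size_perm_iota sa sc m_lt_f f_lt => /(_ isT c_lt).
Qed.

Lemma avoids132_of_greedy : greedy n s -> avoids132_seq s.
Proof.
move=> s_greedy a b c /andP[a_lt_b b_lt_c]; rewrite size_perm_iota => c_lt.
apply/negP => /andP[sa_lt_sc sc_lt_sb].
have m_le_sa : prefix_min n s b <= nth 0 s a.
  by apply: prefix_min_le; rewrite ?size_perm_iota; lia.
have sb_eq : nth 0 s b = next_free n (take b s) (prefix_min n s b).
  by apply: s_greedy; rewrite ?size_perm_iota; lia.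
have sc_notin : nth 0 s c \notin take b s by rewrite nth_perm_iota_in_take // -leqNgt ltnW.
have m_lt_sc : prefix_min n s b < nth 0 s c by lia.
have [f_le _ _] := next_freeP (nth_perm_iota_lt c_lt) m_lt_sc sc_notin.
by rewrite -sb_eq in f_le; lia.
Qed.

Lemma descents_scanl_minn : avoids132_seq s -> descents (scanl minn n s) = descents s.
Proof.
move=> s_av; rewrite /descents size_scanl; apply: eq_in_filter => d.
rewrite mem_iota size_perm_iota => /andP[d_gt0 d_lt].
have d_lt_n : d < n by lia.
rewrite !nth_scanl_minn ?size_perm_iota; try lia.
rewrite prednK // prefix_minS ?size_perm_iota; last by lia.
set m := prefix_min n s d.
have m_le : m <= nth 0 s d.-1 by apply: prefix_min_le; rewrite ?size_perm_iota; lia.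
apply/idP/idP => [|sd_lt]; first by lia.
suff : nth 0 s d < m by lia.
rewrite ltnNge; apply/negP => m_le_sd.
have [a a_lt sa] : exists2 a, a < d & nth 0 s a = m.
  by apply: prefix_min_attained; have := @nth_perm_iota_lt d.-1; lia.
have m_lt_sd : m < nth 0 s d.
  by rewrite ltn_neqAle m_le_sd andbT -sa nth_perm_iota_inj; lia.
have a_lt' : a < d.-1.
  rewrite ltn_neqAle -ltnS prednK // a_lt andbT.
  by apply/eqP => a_eq; rewrite a_eq in sa; lia.
move: (s_av a d.-1 d); rewrite a_lt' sa m_lt_sd sd_lt size_perm_iota prednK // leqnn.
by move=> /(_ isT d_lt_n).
Qed.

End PermutationSequence.

Lemma greedy_inj n s t : greedy n s -> greedy n t ->
  scanl minn n s = scanl minn n t -> s = t.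
Proof.
move=> gs gt E; have size_st : size s = size t.
  by rewrite -(size_scanl minn n s) E size_scanl.
suff take_st k : k <= size s -> take k s = take k t.
  by rewrite -(take_size s) take_st // size_st take_size.
elim: k => [|k IH] k_lt; first by rewrite !take0.
have k_t : k < size t by rewrite -size_st.
rewrite (take_nth 0 k_lt) (take_nth 0 k_t) (IH (ltnW k_lt)) //; congr rcons.
have pm_st : prefix_min n s k = prefix_min n t k by rewrite /prefix_min (IH (ltnW k_lt)).
have := congr1 (nth 0 ^~ k) E; rewrite !nth_scanl_minn ?size_st // !prefix_minS ?size_st //.
rewrite pm_st; set m := prefix_min n t k => E_k.
have [/andP[s_ge t_ge] | lt] := boolP ((m <= nth 0 s k) && (m <= nth 0 t k)); last first.
  by move: lt E_k; clear; lia.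
have -> : nth 0 s k = next_free n (take k s) m by rewrite /m -pm_st; apply: gs; rewrite ?pm_st.
have -> : nth 0 t k = next_free n (take k t) m by apply: gt.
by rewrite (IH (ltnW k_lt)).
Qed.

Lemma greedy_rcons n u v : greedy n u ->
  (foldl minn n u <= v -> v = next_free n u (foldl minn n u)) -> greedy n (rcons u v).
Proof.
move=> u_greedy v_step k; rewrite size_rcons ltnS leq_eqVlt /prefix_min.
rewrite -cats1 nth_cat => /predU1P [-> | k_lt].
  by rewrite takel_cat // take_size ltnn subnn.
by rewrite takel_cat ?(ltnW k_lt) // k_lt; apply: u_greedy.
Qed.

Definition greedy_next n u x :=
  let m := foldl minn n u in if x < m then x else next_free n u m.

Fixpoint greedy_extend n (u ms : seq nat) : seq nat :=
  if ms is x :: ms' then greedy_extend n (rcons u (greedy_next n u x)) ms' else u.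

Lemma greedy_next_spec n u x : x <= foldl minn n u -> x + size u < n ->
  [/\ greedy_next n u x \notin u, greedy_next n u x < n,
      foldl minn n u <= greedy_next n u x ->
        greedy_next n u x = next_free n u (foldl minn n u)
    & minn (foldl minn n u) (greedy_next n u x) = x].
Proof.
move=> x_le x_lt; rewrite /greedy_next; set m := foldl minn n u.
have m_le_n : m <= n by apply: foldl_minn_le_init.
case: ltnP => [x_lt_m | m_le_x]; last have {m_le_x x_le} x_m : x = m by lia.
  split; [ | lia | by rewrite leqNgt x_lt_m | exact/minn_idPr/ltnW].
  by apply/negP => /(foldl_minn_le n); rewrite -/m leqNgt x_lt_m.
have m_u : m \in u.
  by have := foldl_minn_mem n u; rewrite -/m in_cons => /predU1P [m_n | //]; lia.
have [v [v_lt m_lt_v v_u]] : exists v, [/\ v < n, m < v & v \notin u].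
  have [/allP iota_u | /allPn [v v_in v_u]] := boolP (all (mem u) (iota m (n - m))).
    have : n - m <= size u by rewrite -{1}(size_iota m (n - m)) uniq_leq_size ?iota_uniq.
    lia.
  exists v; move: v_in; rewrite mem_iota subnKC // => /andP[m_le_v ->]; split=> //.
  by rewrite ltn_neqAle m_le_v andbT; apply: contraNneq v_u => <-.
have [f_le m_lt_f f_u] := next_freeP v_lt m_lt_v v_u.
by split=> //; lia.
Qed.

Lemma greedy_extend_spec n u ms :
  uniq u -> all (fun v => v < n) u -> greedy n u -> path geq (foldl minn n u) ms ->
  (forall k, k < size ms -> nth 0 ms k + (size u + k) < n) ->
  let s := greedy_extend n u ms in
  [/\ uniq s, all (fun v => v < n) s, greedy n s & scanl minn n s = scanl minn n u ++ ms].
Proof.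
elim: ms u => [|x ms IH] u u_uniq u_lt u_greedy /=; first by rewrite cats0.
move=> /andP[x_le ms_path] bound.
have x_lt : x + size u < n by have := bound 0 isT; rewrite addn0.
have [v_u v_lt v_step v_min] := greedy_next_spec x_le x_lt.
have := IH (rcons u (greedy_next n u x)).
rewrite rcons_uniq v_u u_uniq all_rcons v_lt u_lt foldl_rcons v_min.
rewrite size_rcons scanl_rcons foldl_rcons v_min cat_rcons.
apply=> //; first exact: greedy_rcons.
by move=> k k_lt; have := bound k.+1 k_lt; rewrite /= addSnnS.
Qed.

Lemma minima_seq_greedy n ms : minima_seq n ms ->
  exists2 s, perm_eq s (iota 0 n) & greedy n s /\ scanl minn n s = ms.
Proof.
case=> size_ms ms_path bound.
have nil_greedy : greedy n [::] by [].
have [|s_uniq s_lt s_greedy s_scanl] := @greedy_extend_spec n [::] ms isT isT nil_greedy ms_path.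
  by move=> k; rewrite size_ms; apply: bound.
exists (greedy_extend n [::] ms) => //.
by apply: perm_iota0 => //; rewrite -(size_scanl minn n) s_scanl size_ms.
Qed.

Definition one_line n (pi : 'S_n) : seq nat := [seq val (pi i) | i <- enum 'I_n].

Lemma size_one_line n (pi : 'S_n) : size (one_line pi) = n.
Proof. by rewrite size_map size_enum_ord. Qed.

Lemma nth_one_line n (pi : 'S_n) (i : 'I_n) : nth 0 (one_line pi) i = pi i.
Proof. by rewrite (nth_map i) ?nth_ord_enum // size_enum_ord. Qed.

Lemma perm_one_line n (pi : 'S_n) : perm_eq (one_line pi) (iota 0 n).
Proof.
apply: perm_iota0; rewrite ?size_one_line //.
  by rewrite map_inj_uniq ?enum_uniq // => i j /val_inj /perm_inj.
by apply/allP => _ /mapP [i _ ->]; apply: ltn_ord.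
Qed.

Lemma one_line_inj n : injective (@one_line n).
Proof.
by move=> p1 p2 E; apply/permP => i; apply: ord_inj; rewrite -!nth_one_line E.
Qed.

Lemma one_line_surj n s : perm_eq s (iota 0 n) -> exists pi : 'S_n, one_line pi = s.
Proof.
move=> s_perm; have s_lt (i : 'I_n) : nth 0 s i < n by apply: nth_perm_iota_lt.
pose f i := Ordinal (s_lt i).
have f_inj : injective f.
  by move=> i j /(congr1 val) /eqP; rewrite (nth_perm_iota_inj s_perm) // => /eqP /val_inj.
exists (perm f_inj); apply: (@eq_from_nth _ 0) => [|i].
  by rewrite size_one_line (size_perm_iota s_perm).
by rewrite size_one_line => i_lt; rewrite -[i]/(val (Ordinal i_lt)) nth_one_line permE.
Qed.

Lemma avoids132_one_line n (pi : 'S_n) : avoids132 pi <-> avoids132_seq (one_line pi).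
Proof.
split=> [/existsPn pi_av a b c /andP[a_lt_b b_lt_c] | s_av].
  rewrite size_one_line => c_lt.
  have [a_lt b_lt] : a < n /\ b < n by lia.
  move: (pi_av (Ordinal a_lt)) => /existsPn /(_ (Ordinal b_lt)) /existsPn /(_ (Ordinal c_lt)).
  rewrite /= a_lt_b b_lt_c -(nth_one_line pi (Ordinal a_lt)).
  by rewrite -(nth_one_line pi (Ordinal b_lt)) -(nth_one_line pi (Ordinal c_lt)).
apply/existsPn => i; apply/existsPn => j; apply/existsPn => k.
apply/negP => /and4P[ij jk h1 h2].
by move: (s_av i j k); rewrite ij jk size_one_line ltn_ord !nth_one_line h1 h2 => /(_ isT isT).
Qed.

Lemma Des_one_line n (pi : 'S_n) : Des pi = descents (one_line pi).
Proof. by rewrite /Des /descents size_one_line. Qed.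

Lemma sorted_descents s : sorted leq (descents s).
Proof. by apply: sorted_filter; [exact: leq_trans | exact: iota_sorted]. Qed.

Definition dyck_of_perm n (pi : 'S_n) : seq bool :=
  minima_word n (scanl minn n (one_line pi)).

Lemma dyck_of_perm_dyck n (pi : 'S_n) : is_dyck n (dyck_of_perm pi).
Proof. exact/minima_word_dyck/minima_seq_scanl/perm_one_line. Qed.

Lemma descent_comp_dyck_of_perm n (pi : 'S_n) : 0 < n -> avoids132 pi ->
  descent_comp (dyck_of_perm pi) = alpha n (Des pi).
Proof.
move=> n_gt0 /avoids132_one_line pi_av.
rewrite descent_comp_minima_word; last by rewrite -size_eq0 size_scanl size_one_line -lt0n.
by rewrite size_scanl size_one_line descents_scanl_minn ?perm_one_line // Des_one_line.
Qed.

Lemma dyck_of_perm_inj n (p1 p2 : 'S_n) : avoids132 p1 -> avoids132 p2 ->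
  dyck_of_perm p1 = dyck_of_perm p2 -> p1 = p2.
Proof.
move=> /avoids132_one_line av1 /avoids132_one_line av2.
move=> /(minima_word_inj (path_scanl_minn _ _) (path_scanl_minn _ _)) E.
apply/one_line_inj/(greedy_inj _ _ E).
  exact: greedy_of_avoids132 (perm_one_line p1) av1.
exact: greedy_of_avoids132 (perm_one_line p2) av2.
Qed.

Lemma dyck_of_perm_surj n w : is_dyck n w ->
  exists2 pi : 'S_n, avoids132 pi & dyck_of_perm pi = w.
Proof.
case/dyck_minima_word => ms /minima_seq_greedy [s s_perm [s_greedy s_ms]] <-.
have [pi pi_s] := one_line_surj s_perm.
exists pi; last by rewrite /dyck_of_perm pi_s s_ms.
by apply/avoids132_one_line; rewrite pi_s; apply: avoids132_of_greedy s_perm s_greedy.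
Qed.

Definition dyck_tuple n (pi : 'S_n) : (n.*2).-tuple bool :=
  insubd (nseq_tuple n.*2 false) (dyck_of_perm pi).

Lemma val_dyck_tuple n (pi : 'S_n) : val (dyck_tuple pi) = dyck_of_perm pi.
Proof. by rewrite val_insubd; case/and4P: (dyck_of_perm_dyck pi) => ->. Qed.

Theorem lemma4p6 (n : nat) (S : seq nat) :
  1 <= n -> subset_of_nm1 n S ->
  #|[set pi : 'S_n | avoids132 pi & Des pi == S]| =
  #|[set w : (n.*2).-tuple bool | is_dyck n w & descent_comp w == alpha n S]|.
Proof.
move=> n_gt0 /andP[S_sorted _].
have S_leq : sorted leq S by move: S_sorted; rewrite ltn_sorted_uniq_leq => /andP[].
rewrite -(@card_in_imset _ _ (@dyck_tuple n)); last first.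
  move=> p1 p2; rewrite !inE => /andP[av1 _] /andP[av2 _] /(congr1 val).
  by rewrite !val_dyck_tuple; apply: dyck_of_perm_inj.
apply: eq_card => w; rewrite inE; apply/imsetP/andP => [[pi] | [w_dyck /eqP dc_w]].
  rewrite inE => /andP[pi_av /eqP <-] ->.
  by rewrite val_dyck_tuple dyck_of_perm_dyck descent_comp_dyck_of_perm.
have [pi pi_av pi_w] := dyck_of_perm_surj w_dyck.
exists pi; last by apply: val_inj; rewrite val_dyck_tuple.
rewrite inE pi_av; apply/eqP/(alpha_inj (n := n)) => //.
  by rewrite Des_one_line sorted_descents.
by rewrite -dc_w -pi_w descent_comp_dyck_of_perm.
Qed.
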